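(* Let $\alpha\in\mathbb{R}$, $\gamma,\sigma>0$. Let $p_Y$ be the density on $[0,\infty)$ \[ p_Y(y)=\frac{1}{\Phi\!\left(\frac{\alpha}{\sqrt{\sigma^2\gamma/2}}\right)\sqrt{\pi\sigma^2/\gamma}}\exp\!\left(-\frac{\gamma}{\sigma^2}\Big(y-\frac{\alpha}{\gamma}\Big)^2\right),\quad y\ge 0, \] ($\Phi$ the standard normal distribution function), let $F_Y$ be its distribution function and $\bar F_Y=1-F_Y$. Let $q_L:=\frac{\sigma^2}{2}p_Y(0)$, $W(v):=\exp\left(\frac{2\alpha v}{\sigma^2}-\frac{\gamma v^2}{\sigma^2}\right)$, and let \[ h(x)=\int_{0}^{x}\frac{1}{W(u)}\left(1-\frac{2q_L}{\sigma^{2}}\int_0^u W(v)\,\mathrm{d}v\right)\mathrm{d}u, \] i.e. the unique solution of $(\alpha-\gamma x)h'(x)+\frac{\sigma^2}{2}h''(x)=-q_L$ for $x\ge0$ with $h(0)=0$, $h'(0)=1$. Then for $x>0$, $h'(x)=\frac{p_Y(0)}{p_Y(x)}\bar F_Y(x)$. Moreover, $\int_0^\infty h'(x)^2p_Y(x)\,\mathrm{d}x<\infty$.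
   Context: $p_Y$ is the invariant (truncated normal) density of the Ornstein–Uhlenbeck process $\mathrm{d}Y_t=(\alpha-\gamma Y_t)\mathrm{d}t+\sigma\mathrm{d}W_t$ reflected at $0$ from below. *)

From Stdlib Require Import Reals.
From Coquelicot Require Import Coquelicot.
Open Scope R_scope.

Definition Phi (z : R) : R :=
  RInt_gen (fun t => exp (- t ^ 2 / 2)) (Rbar_locally m_infty) (at_point z)
  / sqrt (2 * PI).

Definition pY (alpha gamma sigma : R) (y : R) : R :=
  / (Phi (alpha / sqrt (sigma ^ 2 * gamma / 2)) * sqrt (PI * sigma ^ 2 / gamma))
  * exp (- (gamma / sigma ^ 2) * (y - alpha / gamma) ^ 2).

Definition FY (alpha gamma sigma : R) (x : R) : R :=
  RInt (pY alpha gamma sigma) 0 x.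
Definition barFY (alpha gamma sigma : R) (x : R) : R :=
  1 - FY alpha gamma sigma x.

Definition qL (alpha gamma sigma : R) : R :=
  sigma ^ 2 / 2 * pY alpha gamma sigma 0.

Definition W (alpha gamma sigma : R) (v : R) : R :=
  exp (2 * alpha * v / sigma ^ 2 - gamma * v ^ 2 / sigma ^ 2).

Definition h (alpha gamma sigma : R) (x : R) : R :=
  RInt (fun u => / W alpha gamma sigma u *
          (1 - 2 * qL alpha gamma sigma / sigma ^ 2 * RInt (W alpha gamma sigma) 0 u))
       0 x.

From Stdlib Require Import Reals Lra Psatz.
From Coquelicot Require Import Coquelicot.
Open Scope R_scope.

(* Completing the square gives [pY y = pY 0 * W y] and [2 qL / sigma^2 = pY 0], so the
   integrand defining [h] is [pY 0 / pY u * barFY u] and the first claim is the fundamental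
   theorem of calculus. For the second, substituting the Gaussian kernel shows that [pY] has
   mass 1, hence [barFY x] is the tail integral of [pY]. Beyond the mode plus one,
   [pY <= (v - mu) pY = - tau^2 pY'], so [barFY <= tau^2 pY] there, and
   [h'^2 pY <= tau^4 pY(0)^2 pY] decays faster than [exp (- x)]. *)

Lemma exp_le_exp x y : x <= y -> exp x <= exp y.
Proof. intros [Hlt | ->]; [left; apply exp_increasing, Hlt | apply Rle_refl]. Qed.

Lemma ex_RInt_cont (f : R -> R) a b : (forall x, continuous f x) -> ex_RInt f a b.
Proof.
  intros Hf; apply (ex_RInt_continuous (V := R_CompleteNormedModule)); intros; apply Hf.
Qed.

Lemma RInt_Chasles_sub (f : R -> R) a u v :
  (forall x, continuous f x) -> RInt f a v - RInt f a u = RInt f u v.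
Proof.
  intros Hf; rewrite <- (RInt_Chasles f a u v) by (apply ex_RInt_cont; auto).
  unfold plus; simpl; ring.
Qed.

Lemma is_RInt_gen_at_point_l (F : (R -> Prop) -> Prop) (f : R -> R) a L :
  (forall x, continuous f x) ->
  filterlim (fun b => RInt f a b) F (locally L) -> is_RInt_gen f (at_point a) F L.
Proof.
  intros Hf Hlim P HP.
  apply (Filter_prod _ _ _ (fun x => x = a) (fun b => P (RInt f a b))).
  - reflexivity.
  - exact (Hlim P HP).
  - intros x y -> HPy; exists (RInt f a y); split; [|exact HPy].
    apply (RInt_correct (V := R_CompleteNormedModule)), ex_RInt_cont, Hf.
Qed.

Lemma is_RInt_gen_at_point_r (F : (R -> Prop) -> Prop) (f : R -> R) b L :
  (forall x, continuous f x) ->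
  filterlim (fun a => RInt f a b) F (locally L) -> is_RInt_gen f F (at_point b) L.
Proof.
  intros Hf Hlim P HP.
  apply (Filter_prod _ _ _ (fun a => P (RInt f a b)) (fun y => y = b)).
  - exact (Hlim P HP).
  - reflexivity.
  - intros x y HPx ->; exists (RInt f x b); split; [|exact HPx].
    apply (RInt_correct (V := R_CompleteNormedModule)), ex_RInt_cont, Hf.
Qed.

Lemma is_lim_scal_exp_opp (B : R) :
  filterlim (fun u => B * exp (- u)) (Rbar_locally p_infty) (locally 0).
Proof.
  rewrite <- (Rmult_0_r B).
  apply (is_lim_scal_l (fun u => exp (- u)) B p_infty 0).
  apply (filterlim_comp _ _ _ Ropp exp _ (Rbar_locally m_infty)).
  - exact (filterlim_Rbar_opp p_infty).
  - exact is_lim_exp_m.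
Qed.

Section ExponentialTail.

Variables (f : R -> R) (M B : R).
Hypothesis f_cont : forall x, continuous f x.
Hypothesis f_exp_bound : forall x, M <= x -> Rabs (f x) <= B * exp (- x).

Lemma RInt_exp_tail_le u v : M <= u <= v -> Rabs (RInt f u v) <= Rabs B * exp (- u).
Proof.
  intros [Hu Hv].
  assert (Hexp : is_RInt (fun x => B * exp (- x)) u v
                   (minus (- B * exp (- v)) (- B * exp (- u)))).
  { apply (is_RInt_derive (fun x => - B * exp (- x))).
    - intros x _; auto_derive; auto; ring.
    - intros x _; apply (ex_derive_continuous (K := R_AbsRing) (V := R_NormedModule)).
      auto_derive; auto. }
  eapply Rle_trans; [apply abs_RInt_le; [lra | apply ex_RInt_cont; auto] |].
  eapply Rle_trans.
  { apply RInt_le with (g := fun x => B * exp (- x)); [lra | | eexists; exact Hexp |].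
    - apply ex_RInt_cont; intros; apply continuous_Rabs_comp, f_cont.
    - intros x Hx; apply f_exp_bound; lra. }
  rewrite (is_RInt_unique _ _ _ _ Hexp); unfold minus, plus, opp; simpl.
  assert (0 < exp (- v)) by apply exp_pos.
  assert (exp (- v) <= exp (- u)) by (apply exp_le_exp; lra).
  destruct (Rle_dec 0 B).
  - rewrite Rabs_pos_eq by lra; nra.
  - rewrite Rabs_left by lra; nra.
Qed.

Lemma RInt_cvg_pinfty a :
  exists L, filterlim (fun b => RInt f a b) (Rbar_locally p_infty) (locally L).
Proof.
  apply (filterlim_locally_cauchy (F := Rbar_locally p_infty)).
  intros eps.
  destruct (is_lim_scal_exp_opp (Rabs B) _ (locally_ball 0 eps)) as [N HN].
  exists (fun b => Rmax M N < b); split; [now exists (Rmax M N) |].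
  assert (Hsmall : forall u, Rmax M N < u -> Rabs B * exp (- u) < eps).
  { intros u Hu.
    assert (Hball := HN u (Rle_lt_trans _ _ _ (Rmax_r M N) Hu)).
    unfold ball in Hball; simpl in Hball; unfold AbsRing_ball, abs, minus, plus, opp in Hball.
    simpl in Hball; rewrite Ropp_0, Rplus_0_r in Hball.
    eapply Rle_lt_trans; [apply Rle_abs | exact Hball]. }
  intros u v Hu Hv.
  unfold ball; simpl; unfold AbsRing_ball, abs, minus, plus, opp; simpl.
  change (Rabs (RInt f a v - RInt f a u) < eps).
  rewrite RInt_Chasles_sub by auto.
  assert (HM := Rmax_l M N).
  destruct (Rle_dec u v).
  - eapply Rle_lt_trans; [apply RInt_exp_tail_le; lra | apply Hsmall; auto].
  - rewrite <- opp_RInt_swap by (apply ex_RInt_cont; auto).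
    unfold opp; simpl; rewrite Rabs_Ropp.
    eapply Rle_lt_trans; [apply RInt_exp_tail_le; lra | apply Hsmall; auto].
Qed.

Lemma ex_RInt_gen_pinfty a : ex_RInt_gen f (at_point a) (Rbar_locally p_infty).
Proof.
  destruct (RInt_cvg_pinfty a) as [L HL].
  exists L; apply is_RInt_gen_at_point_l; auto.
Qed.

End ExponentialTail.

Definition gauss (t : R) : R := exp (- t ^ 2 / 2).

Lemma gauss_pos t : 0 < gauss t.
Proof. apply exp_pos. Qed.

Lemma gauss_cont t : continuous gauss t.
Proof.
  apply (ex_derive_continuous (K := R_AbsRing) (V := R_NormedModule)).
  unfold gauss; auto_derive; auto.
Qed.

Lemma gauss_exp_bound t : Rabs (gauss t) <= exp (1 / 2) * exp (- t).
Proof.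
  unfold gauss; rewrite Rabs_pos_eq by (left; apply exp_pos).
  rewrite <- exp_plus; apply exp_le_exp; pose proof (pow2_ge_0 (t - 1)); nra.
Qed.

Lemma RInt_gauss_opp a b : RInt gauss a b = RInt gauss (- b) (- a).
Proof.
  assert (Hsub := RInt_comp_lin gauss (-1) 0 (- b) (- a)
                    (ex_RInt_cont _ _ _ gauss_cont)).
  replace (-1 * - b + 0) with b in Hsub by ring.
  replace (-1 * - a + 0) with a in Hsub by ring.
  rewrite <- opp_RInt_swap, <- Hsub by (apply ex_RInt_cont, gauss_cont).
  rewrite (RInt_ext _ (fun y => opp (gauss y))).
  - rewrite (RInt_opp (V := R_CompleteNormedModule)) by (apply ex_RInt_cont, gauss_cont).
    apply opp_opp.
  - intros y _; unfold gauss, scal, opp; simpl; unfold mult; simpl.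
    replace ((-1 * y + 0) * ((-1 * y + 0) * 1)) with (y * (y * 1)) by ring; ring.
Qed.

Lemma RInt_gauss_cvg z :
  exists L, 0 < L /\ filterlim (fun b => RInt gauss z b) (Rbar_locally p_infty) (locally L).
Proof.
  destruct (RInt_cvg_pinfty gauss 0 (exp (1 / 2)) gauss_cont
                                 (fun t _ => gauss_exp_bound t) z) as [L HL].
  exists L; split; [| exact HL].
  assert (Hunit : 0 < RInt gauss z (z + 1)).
  { replace 0 with (RInt (fun _ => 0) z (z + 1))
      by (rewrite RInt_const; unfold scal; simpl; unfold mult; simpl; ring).
    apply RInt_lt; [lra | intros; apply gauss_cont | intros; apply continuous_const |].
    intros; apply gauss_pos. }
  enough (Rbar_le (RInt gauss z (z + 1)) L) by (simpl in *; lra).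
  apply (is_lim_le_loc (fun _ => RInt gauss z (z + 1)) (fun b => RInt gauss z b) p_infty);
    [| apply is_lim_const | exact HL].
  exists (z + 1); intros b Hb.
  assert (Hrest : 0 <= RInt gauss (z + 1) b).
  { apply RInt_ge_0; [lra | apply ex_RInt_cont, gauss_cont | intros; left; apply gauss_pos]. }
  rewrite <- (RInt_Chasles_sub gauss z (z + 1) b gauss_cont) in Hrest; lra.
Qed.

(* The symmetry of [gauss] turns the lower tail defining [Phi z] into an upper tail. *)
Lemma Phi_cvg z :
  0 < Phi z /\
  filterlim (fun b => RInt gauss (- z) b) (Rbar_locally p_infty)
            (locally (sqrt (2 * PI) * Phi z)).
Proof.
  destruct (RInt_gauss_cvg (- z)) as [L [HL Hlim]].
  assert (Hlower : filterlim (fun a => RInt gauss a z) (Rbar_locally m_infty) (locally L)).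
  { apply (filterlim_ext (fun a => RInt gauss (- z) (- a))).
    - intros a; symmetry; apply RInt_gauss_opp.
    - exact (filterlim_comp _ _ _ Ropp _ _ _ _ (filterlim_Rbar_opp m_infty) Hlim). }
  assert (HPhi : Phi z = L / sqrt (2 * PI)).
  { unfold Phi; change (RInt_gen gauss (Rbar_locally m_infty) (at_point z) / sqrt (2 * PI)
                        = L / sqrt (2 * PI)).
    now rewrite (is_RInt_gen_unique gauss L (is_RInt_gen_at_point_r _ _ _ _ gauss_cont Hlower)). }
  assert (Hsqrt : 0 < sqrt (2 * PI)) by (apply sqrt_lt_R0; pose proof PI_RGT_0; lra).
  split.
  - rewrite HPhi; apply Rdiv_lt_0_compat; auto.
  - replace (sqrt (2 * PI) * Phi z) with L by (rewrite HPhi; field; lra); exact Hlim.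
Qed.

Section InvariantDensity.

Variables alpha gamma sigma : R.
Hypothesis gamma_pos : 0 < gamma.
Hypothesis sigma_pos : 0 < sigma.

Local Notation p := (pY alpha gamma sigma).
Local Notation w := (W alpha gamma sigma).
Local Notation barF := (barFY alpha gamma sigma).

(* Mean and standard deviation of the Gaussian that [pY] truncates. *)
Let mu := alpha / gamma.
Let tau := sqrt (sigma ^ 2 * gamma / 2) / gamma.

Lemma tau_pos : 0 < tau.
Proof.
  apply Rdiv_lt_0_compat; [apply sqrt_lt_R0 | exact gamma_pos].
  pose proof (pow_lt sigma 2 sigma_pos); nra.
Qed.

Lemma tau_sq : tau * tau = sigma ^ 2 / (2 * gamma).
Proof.
  unfold tau.
  replace (sqrt (sigma ^ 2 * gamma / 2) / gamma * (sqrt (sigma ^ 2 * gamma / 2) / gamma))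
    with (sqrt (sigma ^ 2 * gamma / 2) * sqrt (sigma ^ 2 * gamma / 2) / (gamma * gamma))
    by (field; lra).
  rewrite sqrt_sqrt by (pose proof (pow_lt sigma 2 sigma_pos); nra).
  field; lra.
Qed.

Lemma pY_eq_gauss y : p y = p mu * gauss ((y - mu) / tau).
Proof.
  assert (Htau := tau_pos).
  unfold pY, gauss; rewrite Rmult_assoc, <- exp_plus; f_equal; f_equal.
  replace (((y - mu) / tau) ^ 2) with ((y - mu) ^ 2 / (tau * tau)) by (field; lra).
  rewrite tau_sq; unfold mu; field; lra.
Qed.

Lemma pY_mode_normalization : p mu * tau * (sqrt (2 * PI) * Phi (mu / tau)) = 1.
Proof.
  assert (Htau := tau_pos).
  assert (Hpi : 0 < sqrt (2 * PI)) by (apply sqrt_lt_R0; pose proof PI_RGT_0; lra).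
  assert (HPhi := proj1 (Phi_cvg (mu / tau))).
  assert (Harg : alpha / sqrt (sigma ^ 2 * gamma / 2) = mu / tau).
  { assert (0 < sqrt (sigma ^ 2 * gamma / 2))
      by (apply sqrt_lt_R0; pose proof (pow_lt sigma 2 sigma_pos); nra).
    unfold mu, tau; field; lra. }
  assert (Hsd : sqrt (PI * sigma ^ 2 / gamma) = tau * sqrt (2 * PI)).
  { rewrite <- (sqrt_square (tau * sqrt (2 * PI))) by (left; apply Rmult_lt_0_compat; auto).
    f_equal.
    replace (tau * sqrt (2 * PI) * (tau * sqrt (2 * PI)))
      with (tau * tau * (sqrt (2 * PI) * sqrt (2 * PI))) by ring.
    rewrite tau_sq, sqrt_sqrt by (pose proof PI_RGT_0; lra); field; lra. }
  unfold pY; rewrite Harg, Hsd.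
  replace (mu - alpha / gamma) with 0 by (unfold mu; ring).
  replace (- (gamma / sigma ^ 2) * 0 ^ 2) with 0 by ring.
  rewrite exp_0; field; repeat split; lra.
Qed.

Lemma pY_pos y : 0 < p y.
Proof.
  rewrite pY_eq_gauss; apply Rmult_lt_0_compat; [| apply gauss_pos].
  assert (H := pY_mode_normalization).
  assert (0 < tau * (sqrt (2 * PI) * Phi (mu / tau))).
  { apply Rmult_lt_0_compat; [apply tau_pos |].
    apply Rmult_lt_0_compat; [apply sqrt_lt_R0; pose proof PI_RGT_0; lra |].
    apply (Phi_cvg (mu / tau)). }
  nra.
Qed.

Lemma pY_cont y : continuous p y.
Proof.
  apply (ex_derive_continuous (K := R_AbsRing) (V := R_NormedModule)).
  unfold pY; auto_derive; auto.
Qed.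

Lemma RInt_pY_gauss b :
  RInt p 0 b = p mu * tau * RInt gauss (- (mu / tau)) ((b - mu) / tau).
Proof.
  assert (Htau := tau_pos).
  assert (Hsub := RInt_comp_lin p tau mu (- (mu / tau)) ((b - mu) / tau)
                    (ex_RInt_cont _ _ _ pY_cont)).
  replace (tau * - (mu / tau) + mu) with 0 in Hsub by (field; lra).
  replace (tau * ((b - mu) / tau) + mu) with b in Hsub by (field; lra).
  rewrite <- Hsub, (RInt_ext _ (fun t => scal (tau * p mu) (gauss t))).
  - rewrite (RInt_scal (V := R_CompleteNormedModule)) by (apply ex_RInt_cont, gauss_cont).
    unfold scal; simpl; unfold mult; simpl; ring.
  - intros t _; rewrite pY_eq_gauss; unfold scal; simpl; unfold mult; simpl.
    replace ((tau * t + mu - mu) / tau) with t by (field; lra); ring.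
Qed.

Lemma pY_total_mass :
  filterlim (fun b => RInt p 0 b) (Rbar_locally p_infty) (locally 1).
Proof.
  assert (Htau := tau_pos).
  apply (filterlim_ext (fun b => p mu * tau * RInt gauss (- (mu / tau)) ((b - mu) / tau)));
    [intros; symmetry; apply RInt_pY_gauss |].
  rewrite <- pY_mode_normalization.
  apply (is_lim_scal_l (fun b => RInt gauss (- (mu / tau)) ((b - mu) / tau)) (p mu * tau) p_infty
           (sqrt (2 * PI) * Phi (mu / tau))).
  apply (filterlim_comp _ _ _ (fun b => (b - mu) / tau) _ _ (Rbar_locally p_infty));
    [| apply Phi_cvg].
  intros P [M HM]; exists (tau * M + mu); intros x Hx; apply HM.
  apply (Rmult_lt_reg_l tau); auto.
  replace (tau * ((x - mu) / tau)) with (x - mu) by (field; lra); lra.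
Qed.

Lemma pY_eq_W y : p y = p 0 * w y.
Proof.
  unfold pY, W; rewrite Rmult_assoc, <- exp_plus; f_equal; f_equal; field; lra.
Qed.

Lemma W_cont y : continuous w y.
Proof.
  apply (ex_derive_continuous (K := R_AbsRing) (V := R_NormedModule)).
  unfold W; auto_derive; auto.
Qed.

Lemma pY_derive v : is_derive p v (- ((v - mu) / (tau * tau)) * p v).
Proof.
  assert (Htau := tau_pos).
  unfold pY; set (C := / (Phi _ * _)); auto_derive; auto.
  rewrite tau_sq; unfold mu; simpl; unfold Rminus; field; lra.
Qed.

Lemma RInt_pY_tail_le x b : mu + 1 <= x <= b -> RInt p x b <= tau * tau * p x.
Proof.
  intros [Hx Hb].
  assert (Htau := tau_pos).
  assert (Hprim : is_RInt (fun v => (v - mu) * p v) x b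
                    (minus (- (tau * tau) * p b) (- (tau * tau) * p x))).
  { apply (is_RInt_derive (fun v => - (tau * tau) * p v)).
    - intros v _.
      replace ((v - mu) * p v) with (- (tau * tau) * (- ((v - mu) / (tau * tau)) * p v))
        by (field; lra).
      apply is_derive_scal, pY_derive.
    - intros v _; apply (continuous_mult (fun v => v - mu) p); [| apply pY_cont].
      apply (continuous_minus (fun v => v) (fun _ => mu));
        [apply continuous_id | apply continuous_const]. }
  assert (Hle : RInt p x b <= RInt (fun v => (v - mu) * p v) x b).
  { apply RInt_le; [exact Hb | apply ex_RInt_cont, pY_cont | eexists; exact Hprim |].
    intros v Hv; pose proof (pY_pos v); nra. }
  rewrite (is_RInt_unique _ _ _ _ Hprim) in Hle; unfold minus, plus, opp in Hle; simpl in Hle.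
  pose proof (pY_pos b); nra.
Qed.

Lemma barFY_cvg x :
  filterlim (fun b => RInt p x b) (Rbar_locally p_infty) (locally (barF x)).
Proof.
  apply (filterlim_ext (fun b => RInt p 0 b - RInt p 0 x));
    [intros; apply RInt_Chasles_sub, pY_cont |].
  apply (is_lim_minus _ _ p_infty 1 (RInt p 0 x) (barF x));
    [exact pY_total_mass | apply is_lim_const | reflexivity].
Qed.

Lemma barFY_bounds x : mu + 1 <= x -> 0 <= barF x <= tau * tau * p x.
Proof.
  intros Hx.
  assert (Htail : Rbar_locally' p_infty (fun b => 0 <= RInt p x b <= tau * tau * p x)).
  { exists x; intros b Hb; split.
    - apply RInt_ge_0; [lra | apply ex_RInt_cont, pY_cont | intros; left; apply pY_pos].
    - apply RInt_pY_tail_le; lra. }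
  split.
  - enough (Rbar_le 0 (barF x)) by (simpl in *; lra).
    apply (is_lim_le_loc (fun _ => 0) (fun b => RInt p x b) p_infty);
      [| apply is_lim_const | apply barFY_cvg].
    eapply filter_imp; [| exact Htail]; simpl; tauto.
  - enough (Rbar_le (barF x) (tau * tau * p x)) by (simpl in *; lra).
    apply (is_lim_le_loc (fun b => RInt p x b) (fun _ => tau * tau * p x) p_infty);
      [| apply barFY_cvg | apply is_lim_const].
    eapply filter_imp; [| exact Htail]; simpl; tauto.
Qed.

Local Notation hprime x := (p 0 / p x * barF x).

Lemma h_integrand_eq u :
  / w u * (1 - 2 * qL alpha gamma sigma / sigma ^ 2 * RInt w 0 u) = hprime u.
Proof.
  assert (Hp0 := pY_pos 0).
  assert (Hmass : RInt p 0 u = p 0 * RInt w 0 u).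
  { rewrite (RInt_ext _ (fun v => scal (p 0) (w v))) by (intros; apply pY_eq_W).
    now rewrite (RInt_scal (V := R_CompleteNormedModule)) by (apply ex_RInt_cont, W_cont). }
  unfold barFY, FY, qL; rewrite Hmass, (pY_eq_W u).
  field; split; [apply Rgt_not_eq, exp_pos | lra].
Qed.

Lemma barFY_cont x : continuous barF x.
Proof.
  apply (continuous_minus (fun _ => 1) (fun x => RInt p 0 x)); [apply continuous_const |].
  apply (ex_derive_continuous (K := R_AbsRing) (V := R_NormedModule)).
  exists (p x); apply (is_derive_RInt (V := R_CompleteNormedModule) _ _ 0); [| apply pY_cont].
  apply filter_forall; intros b.
  apply (RInt_correct (V := R_CompleteNormedModule)), ex_RInt_cont, pY_cont.
Qed.

Lemma hprime_cont x : continuous (fun x => hprime x) x.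
Proof.
  apply (continuous_mult (fun x => p 0 / p x) barF); [| apply barFY_cont].
  apply (continuous_mult (fun _ => p 0) (fun x => / p x)); [apply continuous_const |].
  apply continuous_Rinv_comp; [apply pY_cont | apply Rgt_not_eq, pY_pos].
Qed.

Lemma h_derive x : is_derive (h alpha gamma sigma) x (hprime x).
Proof.
  set (f u := / w u * (1 - 2 * qL alpha gamma sigma / sigma ^ 2 * RInt w 0 u)).
  assert (Hf_cont : forall u, continuous f u).
  { intros u; apply (continuous_ext (fun u => hprime u));
      [intros; symmetry; apply h_integrand_eq | apply hprime_cont]. }
  rewrite <- h_integrand_eq; change (h alpha gamma sigma) with (fun x => RInt f 0 x).
  apply (is_derive_RInt (V := R_CompleteNormedModule) f _ 0); [| apply Hf_cont].
  apply filter_forall; intros b.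
  apply (RInt_correct (V := R_CompleteNormedModule)), ex_RInt_cont, Hf_cont.
Qed.

Lemma W_le_exp x : (2 * Rabs alpha + sigma ^ 2) / gamma <= x -> w x <= exp (- x).
Proof.
  intros Hx; unfold W; apply exp_le_exp.
  assert (Hs2 : 0 < sigma ^ 2) by (apply pow_lt; lra).
  assert (Hgx : 2 * Rabs alpha + sigma ^ 2 <= gamma * x).
  { apply (Rmult_le_compat_l gamma) in Hx; [| lra].
    replace (gamma * ((2 * Rabs alpha + sigma ^ 2) / gamma)) with (2 * Rabs alpha + sigma ^ 2)
      in Hx by (field; lra); lra. }
  assert (alpha <= Rabs alpha) by apply Rle_abs.
  assert (0 <= Rabs alpha) by apply Rabs_pos.
  assert (0 <= x) by nra.
  replace (- x) with (- (sigma ^ 2) * x / sigma ^ 2) by (field; lra).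
  replace (2 * alpha * x / sigma ^ 2 - gamma * x ^ 2 / sigma ^ 2)
    with ((2 * alpha * x - gamma * x ^ 2) / sigma ^ 2) by (field; lra).
  apply Rmult_le_compat_r; [left; apply Rinv_0_lt_compat, Hs2 | nra].
Qed.

Lemma h_energy_exp_bound :
  exists M B, forall x, M <= x ->
    Rabs (Derive (h alpha gamma sigma) x ^ 2 * p x) <= B * exp (- x).
Proof.
  exists (Rmax (mu + 1) ((2 * Rabs alpha + sigma ^ 2) / gamma)), ((tau * tau) ^ 2 * p 0 ^ 3).
  intros x Hx.
  rewrite (is_derive_unique _ _ _ (h_derive x)).
  destruct (barFY_bounds x (Rle_trans _ _ _ (Rmax_l _ _) Hx)) as [HF0 HF1].
  assert (Hw := W_le_exp x (Rle_trans _ _ _ (Rmax_r _ _) Hx)).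
  assert (Hpx := pY_pos x); assert (Hp0 := pY_pos 0).
  set (u := barF x / p x).
  assert (Hu : 0 <= u <= tau * tau).
  { unfold u; split; [apply Rdiv_le_0_compat; lra |].
    apply (Rmult_le_reg_r (p x)); auto; unfold Rdiv; rewrite Rmult_assoc, Rinv_l; lra. }
  replace ((p 0 / p x * barF x) ^ 2 * p x) with (p 0 ^ 2 * u ^ 2 * p x) by (unfold u; field; lra).
  rewrite Rabs_pos_eq by (apply Rmult_le_pos; [apply Rmult_le_pos |]; try apply pow2_ge_0; lra).
  rewrite (pY_eq_W x) in *.
  assert (0 <= w x) by (left; apply exp_pos).
  assert (u ^ 2 <= (tau * tau) ^ 2) by (apply pow_incr; lra).
  assert (0 <= p 0 ^ 2) by apply pow2_ge_0.
  replace (p 0 ^ 2 * u ^ 2 * (p 0 * w x)) with ((p 0 ^ 3) * (u ^ 2 * w x)) by ring.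
  replace ((tau * tau) ^ 2 * p 0 ^ 3 * exp (- x)) with ((p 0 ^ 3) * ((tau * tau) ^ 2 * exp (- x)))
    by ring.
  apply Rmult_le_compat_l; [apply pow_le; lra |].
  apply Rmult_le_compat; auto; apply pow2_ge_0.
Qed.

Lemma h_energy_cont x : continuous (fun x => Derive (h alpha gamma sigma) x ^ 2 * p x) x.
Proof.
  apply (continuous_ext (fun x => hprime x * hprime x * p x)).
  - intros y; rewrite (is_derive_unique _ _ _ (h_derive y)); simpl; ring.
  - apply (continuous_mult (fun x => hprime x * hprime x) p); [| apply pY_cont].
    apply (continuous_mult (fun x => hprime x) (fun x => hprime x)); apply hprime_cont.
Qed.

End InvariantDensity.

Theorem lemma4 (alpha gamma sigma : R) (hgamma : 0 < gamma) (hsigma : 0 < sigma) :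
  (forall x : R, 0 < x ->
     is_derive (h alpha gamma sigma) x
       (pY alpha gamma sigma 0 / pY alpha gamma sigma x * barFY alpha gamma sigma x))
  /\ ex_RInt_gen
       (fun x => (Derive (h alpha gamma sigma) x) ^ 2 * pY alpha gamma sigma x)
       (at_point 0) (Rbar_locally p_infty).
Proof.
  split.
  - intros x _; now apply h_derive.
  - destruct (h_energy_exp_bound alpha gamma sigma hgamma hsigma) as [M [B Hbound]].
    apply (ex_RInt_gen_pinfty _ M B); [| exact Hbound].
    now apply h_energy_cont.
Qed.
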